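(* For every integer $n\geq1$, let $f_n(x)=x^n(x-2)-2$ and $g_n(x)=x^n(x-2)+2$. Then $f_n$ and $g_n$ are irreducible in $\mathbb Q[x]$, separable, do not have $0$ as a root, and have no common root. *)

From mathcomp Require Import all_boot all_algebra all_field.
Set Implicit Arguments.
Unset Strict Implicit.
Unset Printing Implicit Defensive.
Import GRing.Theory Num.Theory.
Local Open Scope ring_scope.

Definition fpoly (n : nat) : {poly rat} := 'X^n * ('X - 2%:P) - 2%:P.
Definition gpoly (n : nat) : {poly rat} := 'X^n * ('X - 2%:P) + 2%:P.

From mathcomp Require Import all_boot all_algebra all_field.
Set Implicit Arguments.
Unset Strict Implicit.
Unset Printing Implicit Defensive.

(* Both f_n and g_n have the shape x^n (x - a) + c with a = 2 and c = -2 or 2,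
   hence are Eisenstein at 2 (the constant term c is not divisible by 4), so
   irreducible over Z and, by Gauss's lemma, over Q. In characteristic 0 an
   irreducible polynomial is coprime to its nonzero derivative, hence
   separable. Their constant terms are -2 and 2, and g_n - f_n = 4 is a
   nonzero constant, so f_n and g_n have no common root. *)

Import GRing.Theory Num.Theory.
Local Open Scope ring_scope.

Section Char0.

Variable R : idomainType.
Hypothesis charR0 : [pchar R] =i pred0.

Lemma size_deriv_pchar0 (p : {poly R}) : size p^`() = (size p).-1.
Proof.
have [le_p1 | lt1p] := leqP (size p) 1.
  by rewrite [p]size1_polyC // derivC size_poly0 size_polyC; case: eqP.
rewrite size_poly_eq // -mulr_natr mulf_eq0 negb_or (pcharf0P _).1 // andbT.
by rewrite prednK ?ltn_predRL // -lead_coefE lead_coef_eq0 -size_poly_gt0 ltnW.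
Qed.

Lemma irreducible_separable_pchar0 (p : {poly R}) :
  irreducible_poly p -> separable_poly p.
Proof.
move=> [lt1p p_irr]; rewrite unlock coprimep_def; apply: contraT => g_neq1.
have p'_neq0 : p^`() != 0 by rewrite -size_poly_gt0 size_deriv_pchar0 -subn1 subn_gt0.
have gcd_eqp := p_irr _ g_neq1 (dvdp_gcdl p p^`()).
have p_dvd_p' : p %| p^`() by rewrite -(eqp_dvdl _ gcd_eqp) dvdp_gcdr.
have := dvdp_leq p'_neq0 p_dvd_p'.
by rewrite size_deriv_pchar0 leqNgt ltn_predL ltnW.
Qed.

End Char0.

Definition trinomial (R : nzRingType) (n : nat) (a c : R) : {poly R} :=
  'X^n * ('X - a%:P) + c%:P.

Section Trinomial.

Variable R : nzRingType.
Implicit Types a c : R.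

Lemma trinomialE n a c : trinomial n a c = 'X^(n.+1) - a *: 'X^n + c%:P.
Proof. by rewrite /trinomial mulrBr -exprSr -mul_polyC commr_polyXn. Qed.

Lemma coef_trinomial n a c i :
  (trinomial n a c)`_i = (i == n.+1)%:R - a * (i == n)%:R + (i == 0)%:R * c.
Proof.
rewrite trinomialE coefD coefB coefXn coefZ coefC (coefXn _ n).
by case: (i == 0); rewrite ?mul1r ?mul0r.
Qed.

Lemma size_trinomial n a c : size (trinomial n a c) = n.+2.
Proof.
have size_XnM : size ('X^n * ('X - a%:P)) = n.+2.
  by rewrite size_monicM ?monicXn ?polyXsubC_eq0 // size_polyXn size_XsubC addn2.
by rewrite /trinomial size_polyDl size_XnM // (leq_ltn_trans (size_polyC_leq1 c)).
Qed.

Lemma lead_coef_trinomial n a c : lead_coef (trinomial n a c) = 1.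
Proof.
rewrite lead_coefE size_trinomial coef_trinomial eqxx (gtn_eqF (ltnSn n)).
by rewrite mulr0 subr0 mul0r addr0.
Qed.

Lemma coef0_trinomial n a c : (0 < n)%N -> (trinomial n a c)`_0 = c.
Proof. by move=> n_gt0; rewrite coef_trinomial (ltn_eqF n_gt0) mulr0 subr0 add0r mul1r. Qed.

Lemma root0_trinomial n a c : (0 < n)%N -> root (trinomial n a c) 0 = (c == 0).
Proof. by move=> n_gt0; rewrite /root horner_coef0 coef0_trinomial. Qed.

Lemma map_trinomial (S : nzRingType) (f : {rmorphism R -> S}) n a c :
  map_poly f (trinomial n a c) = trinomial n (f a) (f c).
Proof.
by rewrite /trinomial rmorphD rmorphM /= map_polyXn rmorphB /= map_polyX !map_polyC.
Qed.

End Trinomial.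

Lemma irreducible_trinomial_eisenstein (p n : nat) (a c : int) :
  prime p -> (0 < n)%N -> (p %| a)%Z -> (p %| c)%Z -> ~~ (p ^+ 2 %| c)%Z ->
  irreducible_poly (trinomial n a c).
Proof.
move=> p_pr n_gt0 p_dvd_a p_dvd_c p2_ndvd_c.
apply: (eisenstein_crit p_pr); rewrite ?size_trinomial ?coef0_trinomial //.
  by rewrite lead_coef_trinomial dvdz1 absz_nat gtn_eqF ?prime_gt1.
move=> i /= lt_i_n1; rewrite coef_trinomial (ltn_eqF lt_i_n1) sub0r.
by rewrite rpredD ?rpredN ?(dvdz_mulr _ p_dvd_a) ?(dvdz_mull _ p_dvd_c).
Qed.

Lemma irreducible_rat_trinomial (p n : nat) (a c : int) :
  prime p -> (0 < n)%N -> (p %| a)%Z -> (p %| c)%Z -> ~~ (p ^+ 2 %| c)%Z ->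
  irreducible_poly (trinomial n (a%:~R : rat) c%:~R).
Proof.
move=> p_pr n_gt0 p_dvd_a p_dvd_c p2_ndvd_c.
rewrite -map_trinomial; apply/irreducible_rat_int.
exact: irreducible_trinomial_eisenstein p_pr n_gt0 p_dvd_a p_dvd_c p2_ndvd_c.
Qed.

Lemma no_common_root_subC (R : nzRingType) (p q : {poly R}) (c x : R) :
  q - p = c%:P -> c != 0 -> ~~ (root p x && root q x).
Proof.
move=> qBp c_neq0; apply: contra c_neq0 => /andP[/eqP px0 /eqP qx0].
by rewrite -(hornerC c x) -qBp hornerD hornerN px0 qx0 subr0.
Qed.

Lemma fpolyE n : fpoly n = trinomial n 2 (-2).
Proof. by rewrite /fpoly /trinomial polyCN. Qed.

Lemma gpolyE n : gpoly n = trinomial n 2 2.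
Proof. by []. Qed.

Lemma gpolyBfpoly n : gpoly n - fpoly n = 4%:P.
Proof. by rewrite /gpoly /fpoly opprB addrC addrA addrNK -polyCD. Qed.

Theorem lemma8 (n : nat) (hn : (1 <= n)%N) :
  (irreducible_poly (fpoly n) /\ irreducible_poly (gpoly n)) /\
  (separable_poly (fpoly n) /\ separable_poly (gpoly n)) /\
  (~~ root (fpoly n) 0 /\ ~~ root (gpoly n) 0) /\
  (forall z : algC,
     ~~ (root (map_poly ratr (fpoly n)) z && root (map_poly ratr (gpoly n)) z)).
Proof.
have f_irr : irreducible_poly (fpoly n).
  by rewrite fpolyE; apply: (@irreducible_rat_trinomial 2 n 2 (-2)).
have g_irr : irreducible_poly (gpoly n).
  by rewrite gpolyE; apply: (@irreducible_rat_trinomial 2 n 2 2).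
have sep_irr := irreducible_separable_pchar0 (pchar_num rat).
split=> //.
split; first by split; apply: sep_irr.
split; first by rewrite fpolyE gpolyE !root0_trinomial.
move=> z; apply: (@no_common_root_subC _ _ _ (ratr 4)); last by rewrite fmorph_eq0.
by rewrite -rmorphB gpolyBfpoly /= map_polyC.
Qed.
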